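(* Fix $s>2$ and $\mu^*>0$. Then for every $\mu_1>\mu^*$ there exist $\delta>0$ and a relatively open neighborhood $U\subset\mathcal{C}_{[\mu^*,\mu_1]}$ of $(\Delta\times[\mu^*,\mu_1])\cap\mathcal{C}_{[\mu^*,\mu_1]}$ such that $d\theta(f_{s,\mu}(\mathbf{x}))\ge\delta$ for all $(\mathbf{x},\mu)\in U\setminus(\Delta\times[\mu^*,\mu_1])$.
   Context: $f_{s,\mu}$ is the repressilator vector field $\dot x=\frac{\mu}{1+y^s}-x$, $\dot y=\frac{\mu}{1+z^s}-y$, $\dot z=\frac{\mu}{1+x^s}-z$ on $\mathbb{R}^3_+$. For $\mu\ge0$, $K_\mu:=\{(x,y,z)\colon\frac{\mu}{2+\mu^s}\le x,y,z\le\mu\}$; $\mathcal{C}:=\{(\mathbf{x},\mu)\in\mathbb{R}^3\times\mathbb{R}\colon\mu\ge0,\ \mathbf{x}\in K_\mu\}$ and $\mathcal{C}_J:=\mathcal{C}\cap(\mathbb{R}^3\times J)$. $\Delta:=\mathrm{span}\{(1,1,1)\}$; $\|\mathbf{x}_\perp\|^2=\tfrac23(x^2+y^2+z^2-xy-yz-zx)$ is the squared distance to $\Delta$; $d\theta:=\frac{1}{\sqrt3}\frac{(z-y)dx+(x-z)dy+(y-x)dz}{\|\mathbf{x}_\perp\|^2}$ on $\mathbb{R}^3\setminus\Delta$. *)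

From Stdlib Require Import Reals Lra.
Open Scope R_scope.

(* Hill term mu / (1 + u^s), with real exponent s (u^s := Rpower u s, used only for u > 0). *)
Definition hill (s mu u : R) : R := mu / (1 + Rpower u s).

Definition rep_f1 (s mu x y z : R) : R := hill s mu y - x.
Definition rep_f2 (s mu x y z : R) : R := hill s mu z - y.
Definition rep_f3 (s mu x y z : R) : R := hill s mu x - z.

Definition in_K (s mu x y z : R) : Prop :=
  let lo := mu / (2 + Rpower mu s) in
  lo <= x <= mu /\ lo <= y <= mu /\ lo <= z <= mu.

Definition in_CJ (s a b x y z mu : R) : Prop :=
  0 <= mu /\ in_K s mu x y z /\ a <= mu <= b.

Definition on_diag (x y z : R) : Prop := x = y /\ y = z.

(* squared distance to Delta *)
Definition perp2 (x y z : R) : R :=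
  2 / 3 * (x ^ 2 + y ^ 2 + z ^ 2 - x * y - y * z - z * x).

Definition dtheta (x y z v1 v2 v3 : R) : R :=
  / sqrt 3 * (((z - y) * v1 + (x - z) * v2 + (y - x) * v3) / perp2 x y z).

Definition rel_open (C U : R -> R -> R -> R -> Prop) : Prop :=
  forall x y z mu, U x y z mu ->
    exists eps, 0 < eps /\
      forall x' y' z' mu', C x' y' z' mu' ->
        Rabs (x' - x) < eps -> Rabs (y' - y) < eps -> Rabs (z' - z) < eps ->
        Rabs (mu' - mu) < eps -> U x' y' z' mu'.

From Stdlib Require Import Reals Lra.
Open Scope R_scope.

(* Write p = y - x, q = z - y and h = hill s mu.  In the dtheta numerator of the field
   (h y - x, h z - y, h x - z) the linear terms cancel, and by the mean value theorem
   h y - h x = -p A, h z - h x = -(p + q) B, where A, B are difference quotients of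
   -h; the numerator becomes the quadratic form B (p + q)^2 - A p q, while
   perp2 = 2/3 (p^2 + p q + q^2).  When A and B lie in an interval [Lo, 2 Lo] this form
   is at least Lo/2 (p^2 + p q + q^2), so dtheta >= (3/4) Lo / sqrt 3.
   The interval condition holds in the neighbourhood U of the diagonal where the
   coordinates differ pairwise by less than L (r - 1), with L the lower bound of the
   coordinates on C_[mu*, mu1] and r = (5/4)^(1/s): there the box [min, max] of the
   coordinates satisfies max <= r min, which makes the upper and lower slope bounds of
   h on the box differ by a factor at most (5/4)^3 < 2.  Finally the lower slope bound
   is bounded below uniformly on C_[mu*, mu1], giving delta.
   The argument only uses s >= 1. *)

Lemma Rpower_gt_0 (x t : R) : 0 < Rpower x t.
Proof. apply exp_pos. Qed.

Lemma Rdiv_le_compat (n1 n2 d1 d2 : R) :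
  0 <= n1 <= n2 -> 0 < d2 <= d1 -> n1 / d1 <= n2 / d2.
Proof.
  intros Hn Hd. unfold Rdiv.
  apply Rmult_le_compat; try lra.
  - left; apply Rinv_0_lt_compat; lra.
  - apply Rinv_le_contravar; lra.
Qed.

(* Mean value theorem for u |-> u^s: since the derivative s u^(s-1) is nondecreasing for
   s >= 1, every difference quotient on [a, b] lies between s a^(s-1) and s b^(s-1). *)
Lemma Rpower_diff_quotient (s a b u v : R) :
  0 < a -> 1 <= s -> a <= u <= b -> a <= v <= b ->
  exists D, Rpower v s - Rpower u s = D * (v - u) /\
    s * Rpower a (s - 1) <= D <= s * Rpower b (s - 1).
Proof.
  intros Ha Hs Hu Hv.
  assert (Hderiv : forall c, a <= c <= b ->
            s * Rpower a (s - 1) <= s * Rpower c (s - 1) <= s * Rpower b (s - 1)).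
  { intros c Hc; split; apply Rmult_le_compat_l, Rle_Rpower_l; lra. }
  assert (Hmvt : forall u' v', a <= u' -> u' < v' ->
            exists c, Rpower v' s - Rpower u' s = s * Rpower c (s - 1) * (v' - u')
                      /\ u' < c < v').
  { intros u' v' Hau Huv.
    apply (MVT_cor2 (fun t => Rpower t s) (fun t => s * Rpower t (s - 1)) u' v' Huv).
    intros c Hc; apply derivable_pt_lim_power; lra. }
  destruct (Rtotal_order u v) as [Huv | [Huv | Hvu]].
  - destruct (Hmvt u v) as [c [Hc Hcuv]]; try lra.
    exists (s * Rpower c (s - 1)); split; [exact Hc | apply Hderiv; lra].
  - subst v; exists (s * Rpower a (s - 1)); split; [ring | apply Hderiv; lra].
  - destruct (Hmvt v u) as [c [Hc Hcvu]]; try lra.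
    exists (s * Rpower c (s - 1)); split; [lra | apply Hderiv; lra].
Qed.

(* Lower and upper bounds for the slope of -hill s mu on the box [a, b]. *)
Definition slope_lo (s mu a b : R) : R := mu * s * Rpower a (s - 1) / (1 + Rpower b s) ^ 2.
Definition slope_hi (s mu a b : R) : R := mu * s * Rpower b (s - 1) / (1 + Rpower a s) ^ 2.

Lemma hill_slope (s mu a b u v : R) :
  0 < a -> 1 <= s -> 0 < mu -> a <= u <= b -> a <= v <= b ->
  exists A, hill s mu v - hill s mu u = - (v - u) * A /\
    slope_lo s mu a b <= A <= slope_hi s mu a b.
Proof.
  intros Ha Hs Hmu Hu Hv.
  destruct (Rpower_diff_quotient s a b u v Ha Hs Hu Hv) as [D [HD HDb]].
  set (P := 1 + Rpower u s). set (Q := 1 + Rpower v s).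
  assert (HP : 1 + Rpower a s <= P <= 1 + Rpower b s).
  { unfold P; split; apply Rplus_le_compat_l, Rle_Rpower_l; lra. }
  assert (HQ : 1 + Rpower a s <= Q <= 1 + Rpower b s).
  { unfold Q; split; apply Rplus_le_compat_l, Rle_Rpower_l; lra. }
  assert (Ha1 : 1 < 1 + Rpower a s) by (generalize (Rpower_gt_0 a s); lra).
  assert (HPQ : (1 + Rpower a s) ^ 2 <= P * Q <= (1 + Rpower b s) ^ 2).
  { simpl; rewrite !Rmult_1_r; split; apply Rmult_le_compat; lra. }
  assert (HaD : 0 <= s * Rpower a (s - 1)) by (generalize (Rpower_gt_0 a (s - 1)); nra).
  exists (mu * D / (P * Q)); split.
  - unfold hill; fold P Q.
    assert (HQe : Q = P + D * (v - u)) by (unfold P, Q; lra).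
    rewrite HQe in *. field. lra.
  - unfold slope_lo, slope_hi; rewrite !Rmult_assoc.
    split; apply Rdiv_le_compat; try nra.
Qed.

Lemma slope_hi_le (s mu a b c : R) :
  0 < mu -> 0 < s -> 1 <= c ->
  Rpower b (s - 1) <= c * Rpower a (s - 1) -> Rpower b s <= c * Rpower a s ->
  slope_hi s mu a b <= c ^ 3 * slope_lo s mu a b.
Proof.
  intros Hmu Hs Hc Hb1 Hb.
  unfold slope_hi, slope_lo.
  set (N := mu * s). set (al := Rpower a (s - 1)) in *. set (ga := Rpower a s) in *.
  assert (HN : 0 < N) by (unfold N; nra).
  generalize (Rpower_gt_0 a (s - 1)) (Rpower_gt_0 a s) (Rpower_gt_0 b (s - 1))
             (Rpower_gt_0 b s); fold al ga; intros Hal Hga Hbe Hep.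
  assert (Hhi : N * Rpower b (s - 1) / (1 + ga) ^ 2 <= N * (c * al) / (1 + ga) ^ 2).
  { apply Rdiv_le_compat; [|split; [apply pow_lt|]; lra].
    split; [apply Rmult_le_pos | apply Rmult_le_compat_l]; lra. }
  assert (Hlo : N * al / (c * (1 + ga)) ^ 2 <= N * al / (1 + Rpower b s) ^ 2).
  { apply Rdiv_le_compat; [nra|].
    split; [apply pow_lt; lra | apply pow_incr; nra]. }
  assert (Hscale : c ^ 3 * (N * al / (c * (1 + ga)) ^ 2) = N * (c * al) / (1 + ga) ^ 2).
  { field; lra. }
  assert (c ^ 3 * (N * al / (c * (1 + ga)) ^ 2) <= c ^ 3 * (N * al / (1 + Rpower b s) ^ 2)).
  { apply Rmult_le_compat_l; [apply pow_le|]; lra. }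
  lra.
Qed.

Lemma narrow_box_powers (s a b c : R) :
  1 <= s -> 0 < a <= b -> 1 <= c -> b <= Rpower c (/ s) * a ->
  Rpower b (s - 1) <= c * Rpower a (s - 1) /\ Rpower b s <= c * Rpower a s.
Proof.
  intros Hs Ha Hc Hb.
  set (r := Rpower c (/ s)) in *.
  assert (Hr1 : 1 <= r).
  { unfold r; rewrite <- (Rpower_O c) by lra. apply Rle_Rpower; [lra|].
    left; apply Rinv_0_lt_compat; lra. }
  assert (Hrs : Rpower r s = c).
  { unfold r; rewrite Rpower_mult, Rinv_l by lra. apply Rpower_1; lra. }
  assert (Hpow : forall t, 0 <= t -> Rpower b t <= Rpower r t * Rpower a t).
  { intros t Ht. rewrite Rpower_mult_distr by lra. apply Rle_Rpower_l; lra. }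
  split.
  - eapply Rle_trans; [apply Hpow; lra|].
    apply Rmult_le_compat_r; [left; apply Rpower_gt_0|].
    rewrite <- Hrs; apply Rle_Rpower; lra.
  - rewrite <- Hrs; apply Hpow; lra.
Qed.

Lemma slope_lo_monotone (s mu mu' a a' b b' : R) :
  1 <= s -> 0 <= mu <= mu' -> 0 < a <= a' -> 0 < b <= b' ->
  slope_lo s mu a b' <= slope_lo s mu' a' b.
Proof.
  intros Hs Hmu Ha Hb. unfold slope_lo.
  generalize (Rpower_gt_0 a (s - 1)) (Rpower_gt_0 b s); intros Ha1 Hbs.
  assert (Hpa : Rpower a (s - 1) <= Rpower a' (s - 1)) by (apply Rle_Rpower_l; lra).
  assert (Hpb : Rpower b s <= Rpower b' s) by (apply Rle_Rpower_l; lra).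
  apply Rdiv_le_compat.
  - split; [repeat apply Rmult_le_pos; lra|].
    apply Rmult_le_compat; [apply Rmult_le_pos | | apply Rmult_le_compat_r |]; lra.
  - split; [apply pow_lt | apply pow_incr]; lra.
Qed.

Lemma perp2_diff_form (x y z : R) :
  perp2 x y z = 2 / 3 * ((y - x) ^ 2 + (y - x) * (z - y) + (z - y) ^ 2).
Proof. unfold perp2; ring. Qed.

Lemma perp2_pos (x y z : R) : ~ on_diag x y z -> 0 < perp2 x y z.
Proof.
  unfold on_diag; intros Hnd.
  assert (Hsq : perp2 x y z = / 3 * ((x - y) ^ 2 + (y - z) ^ 2 + (z - x) ^ 2))
    by (unfold perp2; field).
  rewrite Hsq; apply Rmult_lt_0_compat; [lra|].
  generalize (pow2_ge_0 (x - y)) (pow2_ge_0 (y - z)) (pow2_ge_0 (z - x)); intros.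
  destruct (Req_dec x y) as [Exy | Nxy].
  - assert (Nyz : y - z <> 0) by (intro; apply Hnd; lra).
    generalize (Rsqr_pos_lt _ Nyz); unfold Rsqr; simpl in *; nra.
  - assert (Nxy' : x - y <> 0) by lra.
    generalize (Rsqr_pos_lt _ Nxy'); unfold Rsqr; simpl in *; nra.
Qed.

Lemma slope_form_lower_bound (A B Lo p q : R) :
  0 < Lo -> Lo <= A <= 2 * Lo -> Lo <= B ->
  Lo / 2 * (p ^ 2 + p * q + q ^ 2) <= B * (p + q) ^ 2 - A * (p * q).
Proof.
  intros HLo HA HB.
  assert (HBq : Lo * (p + q) ^ 2 <= B * (p + q) ^ 2)
    by (apply Rmult_le_compat_r; [apply pow2_ge_0 | lra]).
  destruct (Rle_or_lt (p * q) 0) as [Hpq | Hpq].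
  - (* p q <= 0: the term - A p q only helps *)
    assert (0 <= (A - Lo) * - (p * q)) by (apply Rmult_le_pos; lra).
    assert (0 <= p ^ 2 + p * q + q ^ 2) by nra.
    assert (0 <= Lo * (p ^ 2 + p * q + q ^ 2)) by (apply Rmult_le_pos; lra).
    nra.
  - (* p q > 0: use A <= 2 Lo and p^2 - p q + q^2 >= 0 *)
    assert (0 <= (2 * Lo - A) * (p * q)) by (apply Rmult_le_pos; lra).
    assert (0 <= p ^ 2 - p * q + q ^ 2) by nra.
    assert (0 <= Lo * (p ^ 2 - p * q + q ^ 2)) by (apply Rmult_le_pos; lra).
    nra.
Qed.

Lemma dtheta_cyclic_lower_bound (x y z gx gy gz A B Lo : R) :
  0 < Lo -> Lo <= A <= 2 * Lo -> Lo <= B -> ~ on_diag x y z ->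
  gy - gx = - (y - x) * A -> gz - gx = - (z - x) * B ->
  dtheta x y z (gy - x) (gz - y) (gx - z) >= / sqrt 3 * (3 / 4 * Lo).
Proof.
  intros HLo HA HB Hnd Hgy Hgz.
  set (p := y - x). set (q := z - y).
  assert (Hnum : (z - y) * (gy - x) + (x - z) * (gz - y) + (y - x) * (gx - z)
                 = B * (p + q) ^ 2 - A * (p * q)).
  { replace gy with (gx - (y - x) * A) by lra.
    replace gz with (gx - (z - x) * B) by lra.
    unfold p, q; ring. }
  assert (Hperp := perp2_pos x y z Hnd).
  assert (Hform := slope_form_lower_bound A B Lo p q HLo HA HB).
  unfold dtheta; rewrite Hnum, perp2_diff_form in *; fold p q in Hperp |- *.
  apply Rle_ge, Rmult_le_compat_l; [left; apply Rinv_0_lt_compat, sqrt_lt_R0; lra|].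
  apply Rmult_le_reg_r with (2 / 3 * (p ^ 2 + p * q + q ^ 2)); [lra|].
  set (N := B * (p + q) ^ 2 - A * (p * q)) in *.
  set (D := 2 / 3 * (p ^ 2 + p * q + q ^ 2)) in *.
  replace (N / D * D) with N by (field; lra).
  unfold D; lra.
Qed.

Definition near_diag (eta x y z : R) : Prop :=
  Rabs (x - y) < eta /\ Rabs (y - z) < eta /\ Rabs (z - x) < eta.

Lemma near_diag_rel_open (C : R -> R -> R -> R -> Prop) (eta : R) :
  rel_open C (fun x y z mu => C x y z mu /\ near_diag eta x y z).
Proof.
  intros x y z mu [_ [Hxy [Hyz Hzx]]].
  set (m := Rmax (Rabs (x - y)) (Rmax (Rabs (y - z)) (Rabs (z - x)))).
  assert (Hm : Rabs (x - y) <= m /\ Rabs (y - z) <= m /\ Rabs (z - x) <= m).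
  { unfold m, Rmax; repeat destruct Rle_dec; lra. }
  assert (Hmeta : m < eta) by (unfold m; repeat apply Rmax_lub_lt; assumption).
  assert (Hshift : forall u v u' v',
            Rabs (u' - v') <= Rabs (u' - u) + Rabs (u - v) + Rabs (v' - v)).
  { intros; unfold Rabs; repeat destruct Rcase_abs; lra. }
  exists ((eta - m) / 2); split; [lra|].
  intros x' y' z' mu' HC' Hx Hy Hz _; split; [exact HC'|].
  repeat split.
  - generalize (Hshift x y x' y'); lra.
  - generalize (Hshift y z y' z'); lra.
  - generalize (Hshift z x z' x'); lra.
Qed.

Lemma near_diag_of_diag (eta x y z : R) : 0 < eta -> on_diag x y z -> near_diag eta x y z.
Proof.
  intros Heta [Hxy Hyz]; subst.
  unfold near_diag; rewrite Rminus_diag, Rabs_R0; lra.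
Qed.

Lemma near_diag_spread (eta x y z : R) :
  near_diag eta x y z -> Rmax x (Rmax y z) < Rmin x (Rmin y z) + eta.
Proof.
  intros [Hxy [Hyz Hzx]].
  apply Rabs_def2 in Hxy; apply Rabs_def2 in Hyz; apply Rabs_def2 in Hzx.
  unfold Rmax, Rmin; repeat destruct Rle_dec; lra.
Qed.

Section DiagonalNeighbourhood.

Variables s mustar mu1 : R.
Hypothesis hs : 1 <= s.
Hypothesis hmu : 0 < mustar.

(* Lower bound for the coordinates of points of C_[mustar, mu1]. *)
Definition coord_lo : R := mustar / (2 + Rpower mu1 s).

(* Admissible ratio max/min of the coordinates, and the corresponding radius. *)
Definition box_ratio : R := Rpower (5 / 4) (/ s).
Definition diag_radius : R := coord_lo * (box_ratio - 1).

Definition slope_min : R := slope_lo s mustar coord_lo mu1.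

Definition diag_nbhd (x y z mu : R) : Prop :=
  in_CJ s mustar mu1 x y z mu /\ near_diag diag_radius x y z.

Lemma coord_lo_pos : 0 < coord_lo.
Proof.
  unfold coord_lo; apply Rdiv_lt_0_compat; [lra|].
  generalize (Rpower_gt_0 mu1 s); lra.
Qed.

Lemma box_ratio_gt_1 : 1 < box_ratio.
Proof.
  unfold box_ratio; rewrite <- (Rpower_O (5 / 4)) by lra.
  apply Rpower_lt; [lra|]. apply Rinv_0_lt_compat; lra.
Qed.

Lemma diag_radius_pos : 0 < diag_radius.
Proof.
  unfold diag_radius; generalize coord_lo_pos box_ratio_gt_1; nra.
Qed.

Lemma slope_min_pos : 0 < slope_min.
Proof.
  unfold slope_min, slope_lo; generalize coord_lo_pos; intro HL.
  apply Rdiv_lt_0_compat.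
  - repeat apply Rmult_lt_0_compat; try lra; apply Rpower_gt_0.
  - apply pow_lt; generalize (Rpower_gt_0 mu1 s); lra.
Qed.

Lemma in_CJ_coord_bounds (x y z mu : R) :
  in_CJ s mustar mu1 x y z mu ->
  mustar <= mu <= mu1 /\ coord_lo <= x <= mu /\ coord_lo <= y <= mu /\ coord_lo <= z <= mu.
Proof.
  intros [_ [[Hx [Hy Hz]] Hmu]].
  assert (Hlo : coord_lo <= mu / (2 + Rpower mu s)).
  { unfold coord_lo; apply Rdiv_le_compat; [lra|].
    generalize (Rpower_gt_0 mu s); split; [lra|].
    apply Rplus_le_compat_l, Rle_Rpower_l; lra. }
  lra.
Qed.

Lemma dtheta_lower_bound_near_diag (x y z mu : R) :
  diag_nbhd x y z mu -> ~ on_diag x y z ->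
  dtheta x y z (rep_f1 s mu x y z) (rep_f2 s mu x y z) (rep_f3 s mu x y z)
    >= / sqrt 3 * (3 / 4 * slope_min).
Proof.
  intros [HC Hnear] Hnd.
  destruct (in_CJ_coord_bounds x y z mu HC) as [Hmu [Hx [Hy Hz]]].
  generalize coord_lo_pos; intro HL.
  set (a := Rmin x (Rmin y z)). set (b := Rmax x (Rmax y z)).
  assert (Hbox : coord_lo <= a /\ a <= x <= b /\ a <= y <= b /\ a <= z <= b /\ b <= mu1).
  { unfold a, b, Rmin, Rmax; repeat destruct Rle_dec; lra. }
  assert (Hnarrow : b <= box_ratio * a).
  { assert (Hspread := near_diag_spread _ _ _ _ Hnear); fold a b in Hspread.
    unfold diag_radius in Hspread.
    assert (coord_lo * (box_ratio - 1) <= a * (box_ratio - 1)).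
    { apply Rmult_le_compat_r; [generalize box_ratio_gt_1 | ]; lra. }
    lra. }
  destruct (narrow_box_powers s a b (5 / 4) hs ltac:(lra) ltac:(lra) Hnarrow)
    as [Hpow1 Hpow].
  destruct (hill_slope s mu a b x y ltac:(lra) hs ltac:(lra) ltac:(lra) ltac:(lra))
    as [A [HA HAb]].
  destruct (hill_slope s mu a b x z ltac:(lra) hs ltac:(lra) ltac:(lra) ltac:(lra))
    as [B [HB HBb]].
  assert (Hratio := slope_hi_le s mu a b (5 / 4) ltac:(lra) ltac:(lra) ltac:(lra) Hpow1 Hpow).
  assert (Hunif : slope_min <= slope_lo s mu a b).
  { apply slope_lo_monotone; lra. }
  generalize slope_min_pos; intro Hmin.
  assert (Hcmp := dtheta_cyclic_lower_bound x y z (hill s mu x) (hill s mu y) (hill s mu z)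
                    A B (slope_lo s mu a b) ltac:(lra) ltac:(lra) ltac:(lra) Hnd HA HB).
  unfold rep_f1, rep_f2, rep_f3.
  assert (Hs3 : 0 < / sqrt 3) by (apply Rinv_0_lt_compat, sqrt_lt_R0; lra).
  assert (/ sqrt 3 * (3 / 4 * slope_min) <= / sqrt 3 * (3 / 4 * slope_lo s mu a b))
    by (apply Rmult_le_compat_l; lra).
  lra.
Qed.

End DiagonalNeighbourhood.

Theorem lemma8 (s mustar : R) (hs : 2 < s) (hmu : 0 < mustar) :
  forall mu1 : R, mustar < mu1 ->
  exists delta : R, 0 < delta /\
  exists U : R -> R -> R -> R -> Prop,
    (forall x y z mu, U x y z mu -> in_CJ s mustar mu1 x y z mu) /\
    rel_open (in_CJ s mustar mu1) U /\
    (forall x y z mu, on_diag x y z -> in_CJ s mustar mu1 x y z mu -> U x y z mu) /\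
    (forall x y z mu, U x y z mu -> ~ on_diag x y z ->
       dtheta x y z (rep_f1 s mu x y z) (rep_f2 s mu x y z) (rep_f3 s mu x y z) >= delta).
Proof.
  intros mu1 _.
  assert (hs1 : 1 <= s) by lra.
  exists (/ sqrt 3 * (3 / 4 * slope_min s mustar mu1)); split.
  { apply Rmult_lt_0_compat; [apply Rinv_0_lt_compat, sqrt_lt_R0; lra|].
    generalize (slope_min_pos s mustar mu1 hs1 hmu); lra. }
  exists (diag_nbhd s mustar mu1); split; [|split; [|split]].
  - intros x y z mu [HC _]; exact HC.
  - apply near_diag_rel_open.
  - intros x y z mu Hdiag HC; split; [exact HC|].
    apply near_diag_of_diag; [apply diag_radius_pos|]; assumption.
  - apply dtheta_lower_bound_near_diag; assumption.
Qed.
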